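(* Let $\Gamma$ be an $n$-dimensional Bieberbach group with cyclic holonomy group $G$ of square-free order $\delta$ and translation subgroup $M$. Then $M=M_{n-1}\oplus\mathbb{Z}$ as $\mathbb{Z}G$-modules, where $\mathbb{Z}$ is a trivial $\mathbb{Z}G$-module generated by the $\delta$-th power of some element $c\in\Gamma$, and $\Gamma=M_{n-1}\rtimes C$ with $C=\langle c\rangle$.
   Context: An $n$-dimensional Bieberbach group is a torsion-free group $\Gamma$ with a normal maximal abelian subgroup $M\cong\mathbb{Z}^n$ of finite index; $G=\Gamma/M$ is the holonomy group, acting faithfully on $M$ by conjugation. *)

(* Bieberbach groups are infinite, so the ambient group is an
   arbitrary (possibly infinite) MathComp [groupType] (boot/monoid.v), and
   subgroups are Prop-valued predicates on it. *)
From HB Require Import structures.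
From mathcomp Require Import all_boot all_order all_algebra.
Set Implicit Arguments.
Unset Strict Implicit.
Unset Printing Implicit Defensive.
Import GRing.Theory.

Local Open Scope group_scope.

Section BieberbachDefs.
Variable G : groupType.

Definition zpow (x : G) (k : int) : G :=
  match k with
  | Posz n => x ^+ n
  | Negz n => (x ^+ n.+1)^-1
  end.

Definition cyc (x : G) : G -> Prop := fun y => exists k : int, y = zpow x k.

Definition is_subgroup (H : G -> Prop) : Prop :=
  [/\ H 1, (forall x y, H x -> H y -> H (x * y)) & (forall x, H x -> H x^-1)].

Definition normal_sub (H : G -> Prop) : Prop :=
  forall x g, H x -> H (x ^ g).

Definition abelian_sub (H : G -> Prop) : Prop :=
  forall x y, H x -> H y -> x * y = y * x.

Definition max_abelian_sub (H : G -> Prop) : Prop :=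
  [/\ is_subgroup H, abelian_sub H &
      forall K, is_subgroup K -> abelian_sub K -> (forall x, H x -> K x) ->
        forall x, K x -> H x].

Definition free_abelian_rank (H : G -> Prop) (n : nat) : Prop :=
  exists f : 'rV[int]_n -> G,
    [/\ forall u v, f (u + v)%R = f u * f v,
        injective f &
        forall x, H x <-> exists u, x = f u].

Definition torsion_free : Prop :=
  forall (x : G) (k : nat), (0 < k)%N -> x ^+ k = 1 -> x = 1.

Definition finite_index (H : G -> Prop) : Prop :=
  exists s : seq G, forall x, exists2 y, y \in s & H (y^-1 * x).

(* Gamma (= the whole group G) is an n-dimensional Bieberbach group with
   translation subgroup M *)
Definition bieberbach (n : nat) (M : G -> Prop) : Prop :=
  [/\ torsion_free, max_abelian_sub M, normal_sub M,
      free_abelian_rank M n & finite_index M].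

(* the holonomy group G/M is cyclic of order d *)
Definition cyclic_holonomy_of_order (M : G -> Prop) (d : nat) : Prop :=
  (0 < d)%N /\
  exists g : G,
    [/\ M (g ^+ d),
        (forall k, (0 < k < d)%N -> ~ M (g ^+ k)) &
        forall x, exists k : nat, M ((g ^+ k)^-1 * x)].

End BieberbachDefs.

Definition squarefree (d : nat) : Prop :=
  forall p : nat, prime p -> ~~ (p * p %| d)%N.

From HB Require Import structures.
From mathcomp Require Import all_boot all_order all_algebra.
From mathcomp Require Import ring.
From Stdlib Require Import ClassicalEpsilon Classical.
Import GRing.Theory.
Set Implicit Arguments.
Unset Strict Implicit.
Unset Printing Implicit Defensive.

(* Read M as Z^n through f, let g lift a generator of the holonomy, A be the matrix
   of conjugation by g and t the coordinates of g^delta, so that t A = t and A^delta = 1.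
   Let p be a prime divisor of delta and q = delta/p.  If p divided t.phi for every
   A-invariant functional phi, then, as p does not divide q, it would divide t.y for every
   A^q-invariant y, making t a norm w (1 + A^q + ... + A^(q(p-1))); then
   (g^q f(-w))^p = 1, and torsion-freeness would put g^q in M.  Summing such witnesses
   with weights delta/p yields an invariant phi with t.phi prime to delta, which may be
   taken primitive.  Then N = f(ker phi) is normal of rank n-1, and c = g^k f(m) with
   k t.phi + delta m.phi = 1 still generates the holonomy while phi(c^delta) = 1, so that
   <c^delta> complements N in M and <c> complements N in Gamma. *)

Local Open Scope ring_scope.

(** * Integer arithmetic *)

Lemma coprime_primes_ndvd m d :
  (0 < d)%N -> (forall p, p \in primes d -> ~~ (p %| m)%N) -> coprime m d.
Proof.
move=> d_gt0 hd; apply: contraT => ncop.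
have g_gt1 : (1 < gcdn m d)%N by rewrite ltn_neqAle eq_sym ncop gcdn_gt0 d_gt0 orbT.
have pg := pdiv_dvd (gcdn m d).
have := hd (pdiv (gcdn m d)); rewrite mem_primes pdiv_prime // d_gt0.
by rewrite (dvdn_trans pg (dvdn_gcdr m d)) (dvdn_trans pg (dvdn_gcdl m d)) => /(_ isT).
Qed.

Lemma squarefree_sum_coprime d (a : nat -> int) :
  (0 < d)%N -> squarefree d ->
  (forall p, p \in primes d -> ~~ (p%:Z %| a p)%Z) ->
  coprime `|(\sum_(p <- primes d) (d %/ p)%:Z * a p)%R|%N d.
Proof.
move=> d_gt0 sqf_d ha; apply: coprime_primes_ndvd => // r r_d.
have /[!mem_primes] /and3P [rp _ rd] := r_d.
rewrite -[r in (r %| _)%N]/(`|r%:Z|%N) -dvdzE.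
rewrite (bigD1_seq r) ?primes_uniq //= rpredDr.
  rewrite !dvdzE abszM /= Gauss_dvdr; first by have := ha r r_d; rewrite dvdzE.
  rewrite prime_coprime //; apply/negP => /(dvdn_mul (dvdnn r)).
  by rewrite mulnC divnK //; apply/negP/sqf_d.
rewrite big_seq_cond; apply: rpred_sum => p /andP [p_d pr]; apply: dvdz_mulr.
move: p_d; rewrite mem_primes => /and3P [pp _ pd].
rewrite dvdzE /= -(Gauss_dvdr _ (_ : coprime r p)); first by rewrite mulnC divnK.
by rewrite prime_coprime // dvdn_prime2 // eq_sym.
Qed.

Lemma coprime_modn_inverse (a : int) d : (0 < d)%N -> coprime `|a| d ->
  exists k e q : nat, exists b : int,
    (k * e = (q * d).+1)%N /\ k%:Z * a + d%:Z * b = 1.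
Proof.
(* [e] is a positive representative of [a] modulo [d], inverted modulo [d] by egcdn. *)
move=> d_gt0 cop_ad; set e := (`|(a %% d%:Z)%Z| + d)%N.
have eE : e%:Z = (a %% d%:Z)%Z + d%:Z by rewrite PoszD gez0_abs ?modz_ge0 // eqz_nat -lt0n.
have cop_ed : coprime e d.
  rewrite -[e]/(`|e%:Z|%N) -[d in coprime _ d]/(`|d%:Z|%N) -coprimezE eE.
  rewrite /coprimez gcdzC gcdzDr gcdzC gcdz_modl.
  by move: cop_ad; rewrite /coprime /gcdz.
have e_gt0 : (0 < e)%N by rewrite addn_gt0 d_gt0 orbT.
have [k q ke _] := egcdnP d e_gt0.
rewrite (eqP cop_ed) addn1 in ke.
exists k, e, q, (- (q%:Z + k%:Z * ((a %/ d%:Z)%Z - 1))); split=> //.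
have aE : a = e%:Z + ((a %/ d%:Z)%Z - 1) * d%:Z by rewrite eE {1}(divz_eq a d%:Z); ring.
set s := (a %/ d%:Z)%Z in aE *; rewrite aE mulrDr -PoszM ke -addn1 PoszD PoszM; ring.
Qed.

(** * Integer matrices *)

Lemma mulmx_fixedX (R : pzRingType) n (C : 'M[R]_n) (x : 'rV[R]_n) k :
  x *m C = x -> x *m C ^+ k = x.
Proof. by move=> xC; elim: k => [|k IH]; rewrite ?expr0 ?mulmx1 // exprSr mulmxA IH xC. Qed.

Lemma fixed_mulmxX (R : pzRingType) n (C : 'M[R]_n) (y : 'cV[R]_n) k :
  C *m y = y -> C ^+ k *m y = y.
Proof. by move=> Cy; elim: k => [|k IH]; rewrite ?expr0 ?mul1mx // exprS -mulmxA IH Cy. Qed.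

Lemma fixed_expmx_sum (R : pzRingType) n (C : 'M[R]_n) (y : 'cV[R]_n) q :
  C ^+ q *m y = y -> C *m (\sum_(j < q) C ^+ j *m y) = \sum_(j < q) C ^+ j *m y.
Proof.
move=> Cqy; apply: (@addrI _ y); rewrite mulmx_sumr.
under eq_bigr => j _ do rewrite mulmxA mulmxE -exprS.
have := big_ord_recl q (fun j => C ^+ j *m y); rewrite expr0 -idmxE mul1mx => <-.
by rewrite big_ord_recr /= Cqy addrC.
Qed.

Section SmithForm.
Variables (n : nat) (B L R : 'M[int]_n) (d : seq int).
Hypothesis B_smith : B = L *m \matrix_(i, k) (d`_i *+ (i == k :> nat)) *m R.

Lemma smith_ker_col (j : 'I_n) :
  R \in unitmx -> d`_j = 0 -> B *m (invmx R *m (delta_mx j 0 : 'cV_n)) = 0.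
Proof.
move=> Ru dj; rewrite B_smith -!mulmxA (mulmxA R) mulmxV // mul1mx -colE.
rewrite (_ : col j _ = 0) ?mulmx0 //.
by apply/colP => i; rewrite !mxE; case: eqP => [->|]; rewrite ?dj ?mul0rn ?mulr0n.
Qed.

Lemma smith_ann_row (K : 'M[int]_n) (j : 'I_n) :
  L \in unitmx -> B *m K = 0 -> d`_j != 0 -> row j (R *m K) = 0.
Proof.
move=> Lu BK0 dj; have : row j (invmx L *m (B *m K)) = 0 by rewrite BK0 mulmx0 row0.
have rowD : row j (\matrix_(i, k) (d`_i *+ (i == k :> nat))) = d`_j *: delta_mx 0 j.
  by apply/rowP => k; rewrite !mxE eqxx /= eq_sym mulr_natr.
rewrite B_smith -!mulmxA mulKmx // [row j _]row_mul rowD -scalemxAl -rowE.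
by move/eqP; rewrite scalemx_eq0 (negbTE dj) => /eqP.
Qed.

End SmithForm.

Lemma fixed_row_is_norm n (C : 'M[int]_n) (p : nat) (x : 'rV[int]_n) :
  (0 < p)%N -> C ^+ p = 1 -> x *m C = x ->
  (forall y : 'cV[int]_n, C *m y = y -> (p%:Z %| (x *m y) ord0 ord0)%Z) ->
  exists w : 'rV[int]_n, x = w *m \sum_(i < p) C ^+ i.
Proof.
move=> p_gt0 Cp xC x_dvd; set Nc := \sum_(i < p) C ^+ i.
(* In the Smith form 1 - C = L D R, the columns R^-1 e_j with d_j = 0 are C-fixed,
   while the rows j of R Nc with d_j != 0 vanish. *)
have [L Lu [R Ru [d _ smith]]] := int_Smith_normal_form (1%:M - C).
have BNc : (1%:M - C) *m Nc = 0.
  by rewrite idmxE mulmxE -opprB mulNr -subrX1 Cp subrr oppr0.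
have xNc : x *m Nc = p%:Z *: x.
  rewrite mulmx_sumr; under eq_bigr => i _ do rewrite mulmx_fixedX //.
  by rewrite sumr_const card_ord -scaler_nat natz.
set z := x *m invmx R.
have z_dvd (j : 'I_n) : d`_j = 0 -> (p%:Z %| z ord0 j)%Z.
  move=> dj; pose y : 'cV_n := invmx R *m delta_mx j 0.
  have Cy : C *m y = y.
    have /eqP : (1%:M - C) *m y = 0 by rewrite (smith_ker_col smith).
    by rewrite mulmxBl mul1mx subr_eq0 => /eqP.
  have := x_dvd y Cy.
  by rewrite mulmxA -/z -colE mxE; apply.
pose w := \row_j (if d`_j == 0 then (z ord0 j %/ p%:Z)%Z else 0).
have zw : z *m (R *m Nc) = p%:Z *: (w *m (R *m Nc)).
  rewrite scalemxAl !mulmx_sum_row; apply: eq_bigr => j _.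
  rewrite [(_ *: w) _ _]mxE [w _ _]mxE; case: eqP => dj; first by rewrite mulrC divzK ?z_dvd.
  by rewrite (smith_ann_row smith) ?Lu ?BNc ?scaler0 //; apply/eqP.
exists (w *m R); apply: (@scalemx_inj _ _ _ p%:Z); first by rewrite eqz_nat -lt0n.
by rewrite -xNc -[x](mulmxKV Ru) -/z -[z *m R *m Nc]mulmxA zw mulmxA.
Qed.

Lemma int_cV_unimodular_multiple n (v : 'cV[int]_n.+1) : v != 0 ->
  exists2 L : 'M[int]_n.+1, L \in unitmx &
    exists2 kappa : int, kappa != 0 & v = kappa *: col 0 L.
Proof.
move=> v_neq0; have [L Lu [R _ [d _ smith]]] := int_Smith_normal_form v.
have vE : v = (d`_0 * R 0 0) *: col 0 L.
  rewrite smith colE -mulmxA scalemxAr; congr (L *m _).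
  apply/colP => i; rewrite !mxE big_ord1 !mxE.
  by case: (unliftP 0 i) => [j ->|->]; rewrite ?mul0rn ?mul0r ?mulr0 // mulr1n mulr1.
exists L => //; exists (d`_0 * R 0 0) => //.
by apply: contraNneq v_neq0 => k0; rewrite vE k0 scale0r.
Qed.

Lemma additive_rV_mx m k (h : 'rV[int]_m -> 'rV[int]_k) :
  {morph h : u v / (u + v)%R} -> forall u, h u = (u *m lin1_mx h)%R.
Proof.
move=> hD; have h0 : h 0%R = 0%R.
  by apply: (@addrI _ (h 0%R)); rewrite -hD !addr0.
have hN u : h (- u)%R = (- h u)%R by apply/eqP; rewrite -addr_eq0 -hD addNr h0.
have hMz u z : h (u *~ z)%R = (h u *~ z)%R.
  have hMn j : h (u *+ j)%R = (h u *+ j)%R.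
    by elim: j => [|j IH]; rewrite ?mulr0n ?h0 // !mulrS hD IH.
  by case: z => j; rewrite ?NegzE ?mulrNz -!pmulrn ?hN hMn.
move=> u; rewrite {1}(row_sum_delta u) (big_morph h hD h0) mulmx_sum_row.
apply: eq_bigr => i _; rewrite -[u 0 i]intz !scaler_int hMz; congr (_ *~ _).
by apply/rowP => j; rewrite !mxE.
Qed.

Local Open Scope group_scope.

(** * Groups and their lattice coordinates *)

Section IntegerPowers.
Variable G : groupType.
Implicit Types (x : G) (a b : int) (m : nat).

Lemma zpowSr x a : zpow x (a + 1)%R = zpow x a * x.
Proof.
case: a => [m|[|m]] /=; first by rewrite addn1 expgSr.
  by rewrite mulVg.
by rewrite subn1 /= [x ^+ m.+2]expgS invgM mulgVK.
Qed.

Lemma zpowDn x a m : zpow x (a + m%:Z)%R = zpow x a * x ^+ m.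
Proof.
elim: m => [|m IH]; first by rewrite addr0 mulg1.
by rewrite -addn1 PoszD addrA zpowSr IH expgnDr mulgA.
Qed.

Lemma zpowBn x a m : zpow x (a - m%:Z)%R = zpow x a * (x ^+ m)^-1.
Proof.
apply: (mulIg (x ^+ m)); rewrite mulgVK -zpowDn.
by rewrite subrK.
Qed.

Lemma zpowN x m : zpow x (- m%:Z)%R = (x ^+ m)^-1.
Proof. by case: m => [|m] /=; rewrite ?invg1. Qed.

Lemma zpowD x a b : zpow x (a + b)%R = zpow x a * zpow x b.
Proof. by case: b => m; rewrite ?NegzE ?zpowBn ?zpowDn. Qed.

Lemma zpowX x m a : zpow (x ^+ m) a = zpow x (a * m%:Z)%R.
Proof.
case: a => k /=; first by rewrite -expgnA mulnC.
by rewrite NegzE mulNr -PoszM zpowN -expgnA mulnC.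
Qed.

End IntegerPowers.

Section HomFromLattice.
Variables (G : groupType) (n : nat) (f : 'rV[int]_n -> G).
Hypothesis fD : forall u v, f (u + v)%R = f u * f v.

Lemma hom0 : f 0%R = 1.
Proof. by apply: (mulgI (f 0%R)); rewrite -fD addr0 mulg1. Qed.

Lemma homN u : f (- u)%R = (f u)^-1.
Proof. by apply: (mulgI (f u)); rewrite -fD subrr mulgV hom0. Qed.

Lemma homMn u k : f (u *+ k)%R = f u ^+ k.
Proof. by elim: k => [|k IH]; rewrite ?mulr0n ?hom0 // mulrSr fD IH expgSr. Qed.

Lemma homMz u z : f (u *~ z)%R = zpow (f u) z.
Proof. by case: z => k /=; rewrite ?NegzE ?mulrNz -pmulrn ?homN homMn. Qed.

Definition hom_preim (x : G) : 'rV[int]_n :=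
  epsilon (inhabits 0%R) (fun u => x = f u).

Lemma hom_preimK x : (exists u, x = f u) -> f (hom_preim x) = x.
Proof. by move=> fx; rewrite /hom_preim -(epsilon_spec (inhabits 0%R) _ fx). Qed.

Definition conj_mx (g : G) : 'M[int]_n := lin1_mx (fun u => hom_preim (f u ^ g)).

Hypothesis finj : injective f.
Hypothesis f_conjg : forall u g, exists v, f u ^ g = f v.

Lemma conj_mxE g u : f (u *m conj_mx g)%R = f u ^ g.
Proof.
have preimD : {morph (fun u : 'rV_n => hom_preim (f u ^ g)) : u v / (u + v)%R}.
  by move=> v w /=; apply: finj; rewrite [RHS]fD !hom_preimK ?f_conjg // fD conjMg.
by rewrite -(additive_rV_mx preimD) hom_preimK.
Qed.

Lemma conj_mxX g k u : f (u *m conj_mx g ^+ k)%R = f u ^ (g ^+ k).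
Proof.
elim: k => [|k IH]; first by rewrite expr0 mulmx1 conjg1.
by rewrite exprSr mulmxA conj_mxE IH expgSr conjgM.
Qed.

Lemma expg_mul_hom (a : G) (A : 'M[int]_n) :
  (forall u, f (u *m A)%R = f u ^ a) ->
  forall u r, (a * f u) ^+ r = a ^+ r * f (u *m \sum_(i < r) A ^+ i)%R.
Proof.
move=> fA u; elim=> [|r IH]; first by rewrite big_ord0 mulmx0 hom0 mulg1.
rewrite expgSr IH -mulgA (mulgA (f _)) (conjgC (f _) a) -fA !mulgA -expgSr -mulgA -fD.
rewrite big_ord_recl expr0 mulmxDr mulmx1 addrC; congr (_ * f (_ + _)).
by rewrite -mulmxA mulmxE mulr_suml; under [X in _ = _ *m X]eq_bigr => i _ do rewrite exprSr.
Qed.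

Definition image_ker (phi : 'cV[int]_n) : G -> Prop :=
  fun x => exists2 u, x = f u & (u *m phi)%R 0 0 = 0%R.

Lemma image_ker_subgroup phi : is_subgroup (image_ker phi).
Proof.
split=> [|_ _ [u -> u0] [v -> v0]|_ [u -> u0]].
- by exists 0%R; rewrite ?hom0 // mul0mx mxE.
- by exists (u + v)%R; rewrite ?fD // mulmxDl mxE u0 v0 addr0.
- by exists (- u)%R; rewrite ?homN // mulNmx mxE u0 oppr0.
Qed.

End HomFromLattice.

Lemma image_ker_sub (G : groupType) n (f : 'rV[int]_n -> G) (M : G -> Prop) phi :
  (forall x, M x <-> exists u, x = f u) -> forall x, image_ker f phi x -> M x.
Proof. by move=> fM _ [u -> _]; apply/fM; exists u. Qed.

Lemma image_ker_free_rank (G : groupType) n (f : 'rV[int]_n.+1 -> G) (L : 'M[int]_n.+1) :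
  (forall u v, f (u + v)%R = f u * f v) -> injective f -> L \in unitmx ->
  free_abelian_rank (image_ker f (col 0 L)) n.
Proof.
move=> fD finj Lu; pose h (w : 'rV[int]_n) : 'rV[int]_n.+1 := (row_mx (0 : 'rV_1) w *m invmx L)%R.
have hL w : (h w *m L = row_mx (0 : 'rV_1) w)%R by rewrite mulmxKV.
have colL (u : 'rV_n.+1) : ((u *m col 0 L) 0 0 = (u *m L) 0 (lshift n (0 : 'I_1)))%R.
  by rewrite colE mulmxA -colE mxE; congr (_ _ _); apply: val_inj.
exists (f \o h); split=> [w1 w2|w1 w2 /finj|x] /=.
- by rewrite -fD -mulmxDl add_row_mx addr0.
- by move/(congr1 (fun u => rsubmx (u *m L : 'rV_(1 + n))%R)); rewrite /= !hL !row_mxKr.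
split=> [[u -> u0]|[w ->]]; last by exists (h w); rewrite // colL hL mxE (unsplitK (inl _)) mxE.
exists (rsubmx (u *m L : 'rV_(1 + n))%R); congr f; apply: (can_inj (mulmxK Lu)).
rewrite hL; apply/rowP => j; rewrite [RHS]mxE.
case: splitP => k jk.
  have -> : j = lshift n k by apply: val_inj.
  by rewrite [RHS]mxE ord1 -colL u0.
have -> : j = rshift 1 k by apply: val_inj.
by rewrite [RHS]mxE.
Qed.

Section NormalSubgroup.
Variables (G : groupType) (M : G -> Prop).
Hypotheses (M_group : is_subgroup M) (M_normal : normal_sub M).

Lemma sub_expg x k : M x -> M (x ^+ k).
Proof.
case: M_group => M1 MM _ Mx.
by elim: k => [|k IH]; rewrite ?expg0 // expgS; apply: MM.
Qed.

Lemma sub_coset_expg x y r : M (y^-1 * x) -> M ((y ^+ r)^-1 * x ^+ r).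
Proof.
case: M_group => M1 MM _ Mxy; elim: r => [|r IH]; first by rewrite !expg0 invg1 mulg1.
have -> : (y ^+ r.+1)^-1 * x ^+ r.+1 = ((y ^+ r)^-1 * x ^+ r) ^ y * (y^-1 * x).
  by rewrite !expgSr invgM conjgE !mulgA mulgK.
by apply: MM => //; apply: M_normal.
Qed.

Lemma sub_expg_dvd x d : (0 < d)%N -> M (x ^+ d) ->
  (forall k, (0 < k < d)%N -> ~ M (x ^+ k)) -> forall e, M (x ^+ e) -> (d %| e)%N.
Proof.
case: M_group => _ MM MV d_gt0 Md d_min e Me.
have : M (x ^+ (e %% d)).
  rewrite -[x ^+ (e %% d)](mulKg ((x ^+ d) ^+ (e %/ d))) -expgnA mulnC -expgnDr -divn_eq mulnC.
  by apply: MM => //; apply: MV; rewrite expgnA; apply: sub_expg.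
case: (posnP (e %% d)) => [/eqP //|e_gt0 Mr]; case: (d_min _ _ Mr).
by rewrite e_gt0 ltn_mod.
Qed.

Lemma coset_inverse_power x y k e q d : M (y ^+ d) -> (k * e = (q * d).+1)%N ->
  M ((y ^+ k)^-1 * x) -> M ((x ^+ e)^-1 * y).
Proof.
case: M_group => _ MM MV Md ke /(sub_coset_expg e) /MV; rewrite invgM invgK -expgnA ke expgS.
rewrite mulgA => Mxy; rewrite -(mulgK (y ^+ (q * d)) (_ * y)).
by apply: MM => //; apply: MV; rewrite mulnC expgnA; apply: sub_expg.
Qed.

Lemma coset_generator_transfer x y e d : M ((x ^+ e)^-1 * y) ->
  (forall z, exists r, M ((y ^+ r)^-1 * z)) -> (forall j, M (y ^+ j) -> (d %| j)%N) ->
  (forall z, exists r, M ((x ^+ r)^-1 * z)) /\ (forall j, M (x ^+ j) -> (d %| j)%N).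
Proof.
case: M_group => _ MM MV Mxy y_gen y_ord; split=> [z|j Mxj].
  have [i Mi] := y_gen z; exists (e * i)%N.
  rewrite -[z](mulVKg (y ^+ i)) mulgA expgnA.
  by apply: MM => //; apply: sub_coset_expg.
apply: y_ord; rewrite -[y ^+ j](mulVKg ((x ^+ e) ^+ j)).
apply: MM; first by rewrite expgnAC; apply: sub_expg.
exact: sub_coset_expg.
Qed.

End NormalSubgroup.

(** * Bieberbach groups with squarefree cyclic holonomy *)

Section Bieberbach.
Variables (Gamma : groupType) (n : nat) (M : Gamma -> Prop) (f : 'rV[int]_n.+1 -> Gamma).
Variables (g : Gamma) (delta : nat).
Hypotheses (Gamma_tfree : torsion_free Gamma) (M_group : is_subgroup M)
  (M_abelian : abelian_sub M) (M_normal : normal_sub M).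
Hypotheses (fD : forall u v, f (u + v)%R = f u * f v) (finj : injective f)
  (fM : forall x, M x <-> exists u, x = f u).
Hypotheses (delta_gt0 : (0 < delta)%N) (M_gdelta : M (g ^+ delta))
  (g_order : forall k, (0 < k < delta)%N -> ~ M (g ^+ k))
  (g_gen : forall x, exists k, M ((g ^+ k)^-1 * x)).
Hypothesis delta_squarefree : squarefree delta.

Local Notation A := (conj_mx f g).
Local Notation t := (hom_preim f (g ^+ delta)).

Lemma M_conjg_fix m x : M m -> M x -> x ^ m = x.
Proof. by move=> Mm Mx; rewrite conjgE (M_abelian Mx Mm) mulKg. Qed.

Lemma f_conjg u y : exists v, f u ^ y = f v.
Proof. by apply/fM/M_normal/fM; exists u. Qed.

Lemma M_f u : M (f u).
Proof. by apply/fM; exists u. Qed.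

Lemma conj_mx_any y u : exists k, f u ^ y = f (u *m A ^+ k)%R.
Proof.
have [k Mk] := g_gen y; exists k.
rewrite (conj_mxX fD finj f_conjg) -[in LHS](mulVKg (g ^+ k) y) conjgM.
by rewrite M_conjg_fix // -(conj_mxX fD finj f_conjg); apply: M_f.
Qed.

Lemma f_t : f t = g ^+ delta.
Proof. by apply: hom_preimK; apply/fM. Qed.

Lemma t_fixed : (t *m A)%R = t.
Proof.
apply: finj; rewrite (conj_mxE fD finj f_conjg) f_t conjgE.
by rewrite -(commuteX delta (commute_refl g)) mulKg.
Qed.

Lemma conj_mx_exp_delta : (A ^+ delta)%R = 1%R.
Proof.
apply/row_matrixP => i; rewrite !rowE; apply: finj.
rewrite (conj_mxX fD finj f_conjg) M_conjg_fix //; last exact: M_f.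
by congr f; apply/esym/mulmx1.
Qed.

Lemma g_exp_dvd e : M (g ^+ e) -> (delta %| e)%N.
Proof. exact: sub_expg_dvd. Qed.

Lemma M_g_exp_of_norm q p w : (q * p)%N = delta -> (0 < p)%N ->
  t = (w *m \sum_(i < p) (A ^+ q) ^+ i)%R -> M (g ^+ q).
Proof.
move=> qp p_gt0 tw; have := expg_mul_hom fD (conj_mxX fD finj f_conjg g q) (- w)%R p.
rewrite mulNmx -tw !(homN fD) f_t -expgnA qp mulgV => /(Gamma_tfree p_gt0)/divg1_eq ->.
exact: M_f.
Qed.

Let invariant_witness p (phi : 'cV[int]_n.+1) :=
  (A *m phi = phi)%R /\ ~~ (p%:Z %| (t *m phi)%R ord0 ord0)%Z.

Lemma exists_invariant_witness p : prime p -> (p %| delta)%N ->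
  exists phi, invariant_witness p phi.
Proof.
move=> p_prime p_delta; apply: NNPP => no_phi.
have t_dvd (phi : 'cV_n.+1) : (A *m phi = phi)%R -> (p%:Z %| (t *m phi)%R ord0 ord0)%Z.
  by move=> A_phi; apply: contraT => ndvd; case: no_phi; exists phi.
have p_gt0 := prime_gt0 p_prime; set q := (delta %/ p)%N.
have qp : (q * p)%N = delta by rewrite divnK.
have q_gt0 : (0 < q)%N by rewrite -(ltn_pmul2r p_gt0) mul0n qp.
have q_lt : (q < delta)%N by rewrite -qp -{1}(muln1 q) ltn_pmul2l // prime_gt1.
have cop_pq : coprime p q.
  rewrite prime_coprime //; apply/negP => /(dvdn_mul (dvdnn p)).
  by rewrite mulnC qp; apply/negP/delta_squarefree.
have tAq : (t *m A ^+ q)%R = t by apply: mulmx_fixedX; apply: t_fixed.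
have Aqp : ((A ^+ q) ^+ p)%R = 1%R by rewrite -exprM qp conj_mx_exp_delta.
have t_dvd_q (y : 'cV_n.+1) :
    (A ^+ q *m y = y)%R -> (p%:Z %| (t *m y)%R ord0 ord0)%Z.
  move=> Aqy; have := t_dvd _ (fixed_expmx_sum Aqy).
  rewrite mulmx_sumr; under eq_bigr => j _ do rewrite mulmxA mulmx_fixedX ?t_fixed //.
  by rewrite sumr_const card_ord mulmxnE -mulr_natl natz !dvdzE abszM /= Gauss_dvdr.
have [w tw] := fixed_row_is_norm p_gt0 Aqp tAq t_dvd_q.
by apply: (g_order (k := q)); [rewrite q_gt0 | exact: M_g_exp_of_norm qp p_gt0 tw].
Qed.

Lemma exists_fixed_col_coprime : exists2 Phi : 'cV[int]_n.+1,
  (A *m Phi = Phi)%R & Phi != 0%R /\ coprime `|(t *m Phi)%R ord0 ord0| delta.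
Proof.
have [delta1|delta_neq1] := eqVneq delta 1%N.
  exists (delta_mx 0 0); last first.
    by rewrite delta1 coprimen1; split=> //; apply/eqP => /matrixP/(_ 0 0)/eqP; rewrite !mxE.
  by have := conj_mx_exp_delta; rewrite delta1 expr1 => ->; rewrite mul1mx.
have [phi phiP] : exists phi : nat -> 'cV[int]_n.+1,
    forall p, p \in primes delta -> invariant_witness p (phi p).
  apply: (choice (fun p phi => p \in primes delta -> invariant_witness p phi)) => p.
  case: (boolP (p \in primes delta)) => [|_]; last by exists 0%R.
  rewrite mem_primes => /and3P[p_prime _ p_delta].
  by have [phi w_phi] := exists_invariant_witness p_prime p_delta; exists phi.
pose Phi := (\sum_(p <- primes delta) (delta %/ p)%:Z *: phi p)%R.
have A_Phi : (A *m Phi = Phi)%R.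
  rewrite mulmx_sumr; apply: eq_big_seq => p /phiP[A_phi _].
  by rewrite -scalemxAr A_phi.
have tPhi : ((t *m Phi) 0 0 =
    \sum_(p <- primes delta) (delta %/ p)%:Z * (t *m phi p) 0 0)%R.
  by rewrite mulmx_sumr summxE; apply: eq_bigr => p _; rewrite -scalemxAr mxE.
have cop : coprime `|(t *m Phi)%R ord0 ord0| delta.
  by rewrite tPhi squarefree_sum_coprime // => p /phiP[].
exists Phi => //; split => //; apply: contraTneq cop => ->.
by rewrite mulmx0 mxE /coprime gcd0n.
Qed.

Lemma exists_primitive_fixed_col : exists2 L : 'M[int]_n.+1, L \in unitmx &
  (A *m col 0 L = col 0 L)%R /\ coprime `|(t *m col 0 L)%R 0 0| delta.
Proof.
have [Phi A_Phi [Phi_neq0 cop]] := exists_fixed_col_coprime.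
have [L L_unit [kappa kappa_neq0 PhiE]] := int_cV_unimodular_multiple Phi_neq0.
exists L => //; split.
  by apply: (scalemx_inj kappa_neq0); rewrite scalemxAr -PhiE.
by move: cop; rewrite PhiE -scalemxAr mxE abszM coprimeMl => /andP[].
Qed.

Lemma exists_splitting_element : exists2 L : 'M[int]_n.+1, L \in unitmx & exists c T,
  [/\ (A *m col 0 L = col 0 L)%R, c ^+ delta = f T, (T *m col 0 L)%R 0 0 = 1%R,
      forall z, exists r, M ((c ^+ r)^-1 * z) & forall j, M (c ^+ j) -> (delta %| j)%N].
Proof.
have [L L_unit [A_phi cop]] := exists_primitive_fixed_col.
have [k [e [q [b [ke kab]]]]] := coprime_modn_inverse delta_gt0 cop.
(* [m0] has phi-coordinate [b], so that phi(c^delta) = k t.phi + delta b = 1. *)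
pose m0 : 'rV_n.+1 := (b *: (delta_mx 0 0 *m invmx L))%R.
have m0_phi : (m0 *m col 0 L)%R 0 0 = b.
  by rewrite colE -scalemxAl !mulmxA mulmxKV // mul_delta_mx !mxE mulr1.
pose c := g ^+ k * f m0; pose T := (t *+ k + m0 *m \sum_(i < delta) (A ^+ k) ^+ i)%R.
have c_g : M ((g ^+ k)^-1 * c) by rewrite mulKg; apply: M_f.
have [c_gen c_order] := coset_generator_transfer M_group M_normal
  (coset_inverse_power M_group M_normal M_gdelta ke c_g) g_gen g_exp_dvd.
exists L => //; exists c, T; split => //.
  rewrite (expg_mul_hom fD (conj_mxX fD finj f_conjg g k)) fD (homMn fD) f_t.
  by rewrite -!expgnA mulnC.
rewrite /T mulmxDl -[m0 *m _ *m _]mulmxA mulmx_suml.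
under eq_bigr => i _ do rewrite -exprM fixed_mulmxX //.
rewrite sumr_const card_ord -!scaler_nat -scalemxAl -scalemxAr mxE.
by rewrite 2![(_ *: _ : 'M_1) 0 0]mxE m0_phi !natz.
Qed.

Section Splitting.
Variables (L : 'M[int]_n.+1) (c : Gamma) (T : 'rV[int]_n.+1).
Local Notation phi := (col 0 L).
Hypotheses (A_phi : (A *m phi = phi)%R) (c_delta : c ^+ delta = f T)
  (T_phi : (T *m phi)%R 0 0 = 1%R) (c_gen : forall z, exists r, M ((c ^+ r)^-1 * z))
  (c_order : forall j, M (c ^+ j) -> (delta %| j)%N).
Local Notation N := (image_ker f phi).

Lemma image_ker_normal : normal_sub N.
Proof.
move=> _ y [u -> u0]; have [k ->] := conj_mx_any y u.
by exists (u *m A ^+ k)%R; rewrite // -mulmxA fixed_mulmxX.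
Qed.

Lemma c_delta_central : M (c ^+ delta) /\ forall y, (c ^+ delta) ^ y = c ^+ delta.
Proof.
have Mcd : M (c ^+ delta) by rewrite c_delta; apply: M_f.
split=> // y; have [r Mr] := c_gen y; rewrite -(mulVKg (c ^+ r) y) conjgM.
have -> : (c ^+ delta) ^ (c ^+ r) = c ^+ delta.
  by rewrite conjgE (commuteX2 _ _ (commute_refl c)) mulKg.
exact: M_conjg_fix.
Qed.

Lemma T_phi_mulz z : ((T *~ z) *m phi)%R 0 0 = z.
Proof. by rewrite -scaler_int -scalemxAl mxE T_phi mulr1 intz. Qed.

Lemma image_ker_cyc_trivial x : N x -> cyc (c ^+ delta) x -> x = 1.
Proof.
move=> [u -> u0] [z]; rewrite c_delta -(homMz fD) => /finj uE.
by move: u0; rewrite uE T_phi_mulz => z0; rewrite z0 mulr0z hom0.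
Qed.

Lemma M_decomposition m : M m ->
  exists2 x, N x & exists2 z, cyc (c ^+ delta) z & m = x * z.
Proof.
move=> /fM[u ->]; set z := (u *m phi)%R 0 0.
exists (f (u - T *~ z)%R).
  by exists (u - T *~ z)%R; rewrite // mulmxBl [LHS]mxE [(- _ : 'M_1) 0 0]mxE T_phi_mulz subrr.
exists (zpow (c ^+ delta) z); first by exists z.
by rewrite c_delta -(homMz fD) -fD subrK.
Qed.

Lemma image_ker_cyc_c_trivial x : N x -> cyc c x -> x = 1.
Proof.
case: M_group => _ _ MV Nx [z xz]; apply: image_ker_cyc_trivial => //.
have Mcz : M (c ^+ `|z|%N).
  by have := image_ker_sub fM Nx; rewrite xz; case: z {xz} => k //= /MV; rewrite invgK.
have delta_z : (delta%:Z %| z)%Z by rewrite dvdzE; apply: c_order.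
by exists (z %/ delta%:Z)%Z; rewrite xz zpowX divzK.
Qed.

Lemma Gamma_decomposition y : exists2 x, N x & exists2 z, cyc c z & y = x * z.
Proof.
have [r Mr] := c_gen y; have [x Nx [_ [z' ->] ey]] := M_decomposition Mr.
exists (x ^ (c ^+ r)^-1); first exact: image_ker_normal.
exists (c ^+ r * zpow (c ^+ delta) z').
  by exists (r%:Z + z' * delta%:Z)%R; rewrite zpowD zpowX.
by rewrite mulgA -conjgCV -mulgA -ey mulVKg.
Qed.

End Splitting.

End Bieberbach.

Lemma rank0_trivial (G : groupType) (M : G -> Prop) (f : 'rV[int]_0 -> G) g d :
  torsion_free G -> (forall u v, f (u + v)%R = f u * f v) ->
  (forall x, M x <-> exists u, x = f u) -> (0 < d)%N -> M (g ^+ d) ->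
  (forall x, exists k, M ((g ^+ k)^-1 * x)) -> forall x : G, x = 1.
Proof.
move=> tf fD fM d_gt0 Mgd g_gen.
have M1 x : M x -> x = 1 by move/fM => [u ->]; rewrite (thinmx0 u) (hom0 fD).
have g1 : g = 1 := tf g d d_gt0 (M1 _ Mgd).
by move=> x; have [k /M1] := g_gen x; rewrite g1 expg1n invg1 mul1g.
Qed.

Theorem lemma3p1 (n : nat) (Gamma : groupType) (M : Gamma -> Prop) (delta : nat) :
  bieberbach n M ->
  cyclic_holonomy_of_order M delta ->
  squarefree delta ->
  exists (N : Gamma -> Prop) (c : Gamma),
    [/\ (* N = M_{n-1} is a ZG-submodule of M, free abelian of rank n-1 *)
        [/\ is_subgroup N, normal_sub N, (forall x, N x -> M x) &
             free_abelian_rank N (n.-1)],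
        (* c^delta lies in M and spans a trivial ZG-module *)
        M (c ^+ delta) /\ (forall g, (c ^+ delta) ^ g = c ^+ delta),
        (* M = N (+) <c^delta> (internal direct sum) *)
        (forall x, N x -> cyc (c ^+ delta) x -> x = 1) /\
        (forall m, M m -> exists2 x, N x & exists2 z, cyc (c ^+ delta) z & m = x * z) &
        (* Gamma = N semidirect C with C = <c> (N is normal, see above) *)
        (forall x, N x -> cyc c x -> x = 1) /\
        (forall g, exists2 x, N x & exists2 z, cyc c z & g = x * z)].
Proof.
move=> [tf [M_group M_abelian _] M_normal [f [fD finj fM]] _].
move=> [delta_gt0 [g [M_gdelta g_order g_gen]]] sqf.
case: n f fD finj fM => [|n] f fD finj fM.
  have trivial1 := rank0_trivial tf fD fM delta_gt0 M_gdelta g_gen.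
  have M_all x : M x by rewrite (trivial1 x); case: M_group.
  have decomp1 (x : Gamma) y : exists2 z, M z & exists2 w, cyc x w & y = z * w.
    by exists 1 => //; exists 1; [exists 0%R | rewrite mulg1 (trivial1 y)].
  exists M, 1; split; do ?split => //; [by exists f | by move=> y; rewrite expg1n conj1g].
have [L L_unit [c [T [A_phi c_delta T_phi c_gen c_order]]]] := exists_splitting_element
  tf M_group M_abelian M_normal fD finj fM delta_gt0 M_gdelta g_order g_gen sqf.
exists (image_ker f (col 0 L)), c; split.
- split; first exact: image_ker_subgroup.
  + exact (image_ker_normal M_abelian M_normal fD finj fM g_gen A_phi).
  + exact: image_ker_sub.
  + exact: image_ker_free_rank.
- exact (c_delta_central M_abelian fM c_delta c_gen).
- split; first exact (image_ker_cyc_trivial fD finj c_delta T_phi).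
  exact (M_decomposition fD fM c_delta T_phi).
split; first exact (image_ker_cyc_c_trivial M_group fD finj fM c_delta T_phi c_order).
exact (Gamma_decomposition M_abelian M_normal fD finj fM g_gen A_phi c_delta T_phi c_gen).
Qed.
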